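(* Let $X\in\{F,A\}$. For every state $\rho^{ab}$ on $\mathcal H_a\otimes\mathcal H_b$, $C^a_{X,cc}(\rho^{ab})\ge D^a_X(\rho^{ab})$. Equality holds if $\rho^a=\mathrm{Tr}_b\rho^{ab}=I^a/n_a$ (with $n_a=\dim\mathcal H_a$), or if $\rho^{ab}$ is a pure state.
   Context: $F(\rho,\sigma)=\mathrm{Tr}\sqrt{\sqrt\sigma\rho\sqrt\sigma}$, $A(\rho,\sigma)=\mathrm{Tr}(\sqrt\rho\sqrt\sigma)$, $d_X=1-X^2$. For an orthonormal basis $\mathcal B=\{|\alpha_i\rangle\}$ of $\mathcal H_a$, let $C^a_X(\rho^{ab};\mathcal B)=\min d_X(\rho^{ab},\sigma)$ over states $\sigma=\sum_ip_i|\alpha_i\rangle\langle\alpha_i|\otimes\sigma_i$. The correlated coherence is $C^a_{X,cc}(\rho^{ab})=\min_{\mathcal B}C^a_X(\rho^{ab};\mathcal B)$, the minimum over orthonormal bases $\mathcal B$ of $\mathcal H_a$ consisting of eigenvectors of $\rho^a$ (equivalently, bases in which $\rho^a$ has zero coherence). The discord-type quantity is $D^a_X(\rho^{ab})=\min d_X(\rho^{ab},\sigma)$ over all classical-quantum states $\sigma=\sum_ip_i|\alpha_i\rangle\langle\alpha_i|\otimes\sigma_i$ with $\{|\alpha_i\rangle\}$ any orthonormal basis of $\mathcal H_a$ (i.e. the minimum of $C^a_X(\rho^{ab};\mathcal B)$ over all orthonormal bases $\mathcal B$). *)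

From HB Require Import structures.
From mathcomp Require Import all_boot all_order all_algebra.
Set Implicit Arguments.
Unset Strict Implicit.
Unset Printing Implicit Defensive.
Import Order.TTheory GRing.Theory Num.Theory Num.Def.
Local Open Scope ring_scope.

Section QInfo.
Variable C : numClosedFieldType.

Definition adjmx m n (A : 'M[C]_(m, n)) : 'M[C]_(n, m) := map_mx conjC A^T.

Definition psdmx n (A : 'M[C]_n) : Prop :=
  forall v : 'cV[C]_n, 0 <= (adjmx v *m A *m v) 0 0.

Definition is_state n (A : 'M[C]_n) : Prop := psdmx A /\ \tr A = 1.

Definition is_pure n (A : 'M[C]_n) : Prop :=
  is_state A /\ exists v : 'cV[C]_n, A = v *m adjmx v.

Definition sqrtmx n (A : 'M[C]_n) : 'M[C]_n :=
  invmx (spectralmx A) *m diag_mx (map_mx sqrtC (spectral_diag A)) *m spectralmx A.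

Definition fidelity n (rho sigma : 'M[C]_n) : C :=
  \tr (sqrtmx (sqrtmx sigma *m rho *m sqrtmx sigma)).

Definition affinity n (rho sigma : 'M[C]_n) : C :=
  \tr (sqrtmx rho *m sqrtmx sigma).

Inductive fid_kind := KF | KA.

Definition Xfun (X : fid_kind) n : 'M[C]_n -> 'M[C]_n -> C :=
  match X with KF => @fidelity n | KA => @affinity n end.

Definition dX (X : fid_kind) n (rho sigma : 'M[C]_n) : C := 1 - (Xfun X rho sigma) ^+ 2.

(* bipartite system H_a (x) H_b, index (i,j) |-> mxvec_index i j *)
Definition bidx na nb (k : 'I_(na * nb)) : 'I_na * 'I_nb :=
  enum_val (cast_ord (esym (mxvec_cast na nb)) k).

Definition kronmx na nb (A : 'M[C]_na) (B : 'M[C]_nb) : 'M[C]_(na * nb) :=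
  \matrix_(k, l) (A (bidx k).1 (bidx l).1 * B (bidx k).2 (bidx l).2).

Definition ptrace_b na nb (rho : 'M[C]_(na * nb)) : 'M[C]_na :=
  \matrix_(i, j) \sum_(k < nb) rho (mxvec_index i k) (mxvec_index j k).

(* orthonormal basis of H_a: columns of a unitary matrix U *)
Definition onbasis na (U : 'M[C]_na) : Prop := adjmx U *m U = 1%:M.

Definition is_cq_in na nb (U : 'M[C]_na) (sigma : 'M[C]_(na * nb)) : Prop :=
  exists (p : 'I_na -> C) (S : 'I_na -> 'M[C]_nb),
    (forall i, 0 <= p i) /\ \sum_i p i = 1 /\ (forall i, is_state (S i)) /\
    sigma = \sum_i p i *: kronmx (col i U *m adjmx (col i U)) (S i).

Definition eigenbasis na (U M : 'M[C]_na) : Prop :=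
  forall i, exists lam : C, M *m col i U = lam *: col i U.

(* set of values d_X(rho, sigma), sigma cq in an eigenbasis of rho^a
   (minimum = correlated coherence C^a_{X,cc}) *)
Definition cc_values (X : fid_kind) na nb (rho : 'M[C]_(na * nb)) : C -> Prop :=
  fun v => exists U sigma, onbasis U /\ eigenbasis U (ptrace_b rho) /\
                           is_cq_in U sigma /\ v = dX X rho sigma.

(* set of values d_X(rho, sigma), sigma cq in any orthonormal basis
   (minimum = discord-type quantity D^a_X) *)
Definition disc_values (X : fid_kind) na nb (rho : 'M[C]_(na * nb)) : C -> Prop :=
  fun v => exists U sigma, onbasis U /\ is_cq_in U sigma /\ v = dX X rho sigma.

Definition is_min (S : C -> Prop) (v : C) : Prop :=
  S v /\ forall w, S w -> v <= w.

End QInfo.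

(** If [U] diagonalizes [rho_a] it is in particular an orthonormal basis, so
    [D_X <= C_X,cc]; when [rho_a] is maximally mixed every basis diagonalizes it.
    For a pure state [|v><v|] and [sigma = sum_i p_i |alpha_i><alpha_i| (x) S_i]
    put [q_i = <alpha_i| rho_a |alpha_i>].  Since [0 <= S_i, sqrt S_i <= 1],
    [F^2 = <v|sigma|v> <= sum_i p_i q_i <= max_i q_i] and
    [A = <v|sqrt sigma|v> <= sum_i sqrt(p_i) q_i <= (sum_i q_i^2)^(1/2)].
    The [q_i] are a doubly stochastic average of the eigenvalues [lam_j] of
    [rho_a], so the bounds are at most [max_j lam_j] and
    [(sum_j lam_j^2)^(1/2)].  Both are attained in the eigenbasis of [rho_a],
    with [S_i] the normalized conditional states [(<alpha_i| (x) I) |v>] and [p]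
    concentrated on a largest eigenvalue, resp. [p_i] proportional to
    [lam_i^2]. *)

From HB Require Import structures.
From mathcomp Require Import all_boot all_order all_algebra.
From mathcomp Require Import ring.
Set Implicit Arguments.
Unset Strict Implicit.
Unset Printing Implicit Defensive.
Import Order.TTheory GRing.Theory Num.Theory Num.Def.
Local Open Scope ring_scope.

Section Adjoint.
Variable C : numClosedFieldType.

Lemma conjCM (x y : C) : (x * y)^* = x^* * y^*.
Proof. exact: rmorphM. Qed.

Lemma adjmxE m n (A : 'M[C]_(m, n)) i j : adjmx A i j = (A j i)^*.
Proof. by rewrite !mxE. Qed.

Lemma adjmxK m n (A : 'M[C]_(m, n)) : adjmx (adjmx A) = A.
Proof. exact: trmxCK. Qed.

Lemma adjmxM m n p (A : 'M[C]_(m, n)) (B : 'M[C]_(n, p)) :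
  adjmx (A *m B) = adjmx B *m adjmx A.
Proof. by rewrite /adjmx trmx_mul map_mxM. Qed.

Lemma adjmxD m n (A B : 'M[C]_(m, n)) : adjmx (A + B) = adjmx A + adjmx B.
Proof. by rewrite /adjmx linearD /= map_mxD. Qed.

Lemma adjmxZ m n a (A : 'M[C]_(m, n)) : adjmx (a *: A) = a^* *: adjmx A.
Proof. by apply/matrixP=> i j; rewrite !mxE rmorphM. Qed.

Lemma adjmx_diag n (d : 'rV[C]_n) : adjmx (diag_mx d) = diag_mx (map_mx conjC d).
Proof. by rewrite /adjmx tr_diag_mx map_diag_mx. Qed.

Lemma invmx_unitaryE n (V : 'M[C]_n) : V \is unitarymx -> invmx V = adjmx V.
Proof. exact: invmx_unitary. Qed.

Lemma unitarymx_mul_adjmx n (V : 'M[C]_n) : V \is unitarymx -> V *m adjmx V = 1%:M.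
Proof. by move/unitarymxP. Qed.

Lemma unitarymx_adjmx_mul n (V : 'M[C]_n) : V \is unitarymx -> adjmx V *m V = 1%:M.
Proof.
by move=> Vu; rewrite -invmx_unitaryE // mulVmx // unitarymx_unit.
Qed.

End Adjoint.

Section QuadraticForm.
Variable C : numClosedFieldType.

Definition qform n (u : 'cV[C]_n) (A : 'M[C]_n) : C := (adjmx u *m A *m u) 0 0.

Lemma qformE n (u : 'cV[C]_n) A :
  qform u A = \sum_j \sum_i (u i 0)^* * A i j * u j 0.
Proof.
rewrite /qform mxE; apply: eq_bigr => j _; rewrite mxE big_distrl.
by apply: eq_bigr => i _; rewrite adjmxE.
Qed.

Lemma qform0 n (A : 'M[C]_n) : qform 0 A = 0.
Proof. by rewrite /qform mulmx0 mxE. Qed.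

Lemma qformZ n (u : 'cV[C]_n) a A : qform u (a *: A) = a * qform u A.
Proof. by rewrite /qform -scalemxAr -scalemxAl mxE. Qed.

Lemma qformZv n (u : 'cV[C]_n) a A : qform (a *: u) A = a^* * a * qform u A.
Proof. by rewrite /qform adjmxZ -!scalemxAl -scalemxAr scalerA mxE. Qed.

Lemma qform_sum n I (r : seq I) (c : I -> C) (M : I -> 'M[C]_n) (v : 'cV[C]_n) :
  qform v (\sum_(i <- r) c i *: M i) = \sum_(i <- r) c i * qform v (M i).
Proof.
rewrite /qform mulmx_sumr mulmx_suml summxE; apply: eq_bigr => i _.
by rewrite -scalemxAr -scalemxAl mxE.
Qed.

Lemma qform_conj n m (K : 'M[C]_(n, m)) (v : 'cV[C]_m) B :
  qform v (adjmx K *m B *m K) = qform (K *m v) B.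
Proof. by rewrite /qform adjmxM !mulmxA. Qed.

Lemma qform1 n (u : 'cV[C]_n) : qform u 1%:M = \sum_i `|u i 0| ^+ 2.
Proof.
rewrite /qform mulmx1 mxE; apply: eq_bigr => i _.
by rewrite adjmxE normCK mulrC.
Qed.

Lemma qform1_ge0 n (u : 'cV[C]_n) : 0 <= qform u 1%:M.
Proof. by rewrite qform1; apply: sumr_ge0 => i _; apply: exprn_ge0. Qed.

Lemma qform1_eq0 n (u : 'cV[C]_n) : qform u 1%:M = 0 -> u = 0.
Proof.
rewrite qform1 => /psumr_eq0P u0; apply/matrixP => i j; rewrite ord1 mxE.
have /eqP := u0 (fun i _ => exprn_ge0 2 (normr_ge0 _)) i isT.
by rewrite expf_eq0 /= normr_eq0 => /eqP.
Qed.

Lemma qform_spectral n (V : 'M[C]_n) (h : 'rV[C]_n) (u : 'cV[C]_n) :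
  qform u (adjmx V *m diag_mx h *m V) = \sum_j h 0 j * `|(V *m u) j 0| ^+ 2.
Proof.
rewrite qform_conj /qform mul_mx_diag mxE; apply: eq_bigr => j _.
by rewrite mxE adjmxE normCK; ring.
Qed.

Lemma sesq_delta n (B : 'M[C]_n) i j :
  (adjmx (delta_mx i 0 : 'cV[C]_n) *m B *m (delta_mx j 0 : 'cV[C]_n)) 0 0 = B i j.
Proof.
have -> : adjmx (delta_mx i 0 : 'cV[C]_n) = delta_mx 0 i.
  by apply/matrixP=> a b; rewrite !mxE conjC_nat andbC.
by rewrite -rowE -colE !mxE.
Qed.

Lemma qform_eq0_mx n (B : 'M[C]_n) : (forall v, qform v B = 0) -> B = 0.
Proof.
move=> B0; apply/matrixP=> i j; rewrite mxE.
have Bkk k : B k k = 0 by rewrite -sesq_delta; exact: B0.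
(* polarization along [e_i + c e_j] *)
have Bc c : B i j * c + B j i * c^* = 0.
  have := B0 (delta_mx i 0 + c *: delta_mx j 0 : 'cV[C]_n).
  rewrite /qform adjmxD adjmxZ !mulmxDl !mulmxDr -!scalemxAl -!scalemxAr.
  rewrite ![((_ + _ : 'M[C]_1) 0 0)]mxE ![((_ *: _ : 'M[C]_1) 0 0)]mxE.
  by rewrite !sesq_delta !Bkk => <-; ring.
have B1 := Bc 1; have Bi := Bc 'i.
rewrite conjC1 !mulr1 in B1; rewrite conjCi in Bi.
have /eqP : 'i * (B i j - B j i) = 0 by rewrite -Bi; ring.
rewrite mulf_eq0 (negbTE (@neq0Ci C)) /= subr_eq0 => /eqP Bsym.
by move/eqP: B1; rewrite Bsym -mulr2n mulrn_eq0 /= => /eqP.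
Qed.

Lemma psdmx_herm n (A : 'M[C]_n) : psdmx A -> adjmx A = A.
Proof.
move=> Ap; apply/eqP; rewrite -subr_eq0; apply/eqP/qform_eq0_mx => v.
have adjA : qform v (adjmx A) = (qform v A)^*.
  by rewrite /qform -adjmxE !adjmxM adjmxK mulmxA.
have -> : qform v (adjmx A - A) = qform v (adjmx A) - qform v A.
  by rewrite /qform mulmxBr mulmxBl mxE [X in _ + X]mxE.
by rewrite adjA geC0_conj ?subrr //; exact: Ap.
Qed.

End QuadraticForm.

Section Spectral.
Variable C : numClosedFieldType.

Lemma qform_spectral_col n (V : 'M[C]_n) (h : 'rV[C]_n) j : V \is unitarymx ->
  qform (col j (adjmx V)) (adjmx V *m diag_mx h *m V) = h 0 j.
Proof.
move=> Vu; rewrite qform_spectral colE mulmxA unitarymx_mul_adjmx // mul1mx.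
rewrite (bigD1 j) //= big1 ?addr0 => [|k /negbTE nk]; rewrite !mxE ?eqxx ?nk /=.
  by rewrite normr1 expr1n mulr1.
by rewrite normr0 expr0n /= mulr0.
Qed.

Lemma psdmx_spectral n (A : 'M[C]_n) : psdmx A ->
  [/\ spectralmx A \is unitarymx,
      A = adjmx (spectralmx A) *m diag_mx (spectral_diag A) *m spectralmx A &
      forall j, 0 <= spectral_diag A 0 j].
Proof.
move=> Ap; have An : A \is normalmx.
  by apply/normalmxP; change (A *m adjmx A = adjmx A *m A); rewrite psdmx_herm.
have Pu := spectral_unitarymx A.
have EA : A = adjmx (spectralmx A) *m diag_mx (spectral_diag A) *m spectralmx A.
  by rewrite -invmx_unitaryE //; apply/orthomx_spectralP.
split => // j; rewrite -(qform_spectral_col _ j Pu) -EA; exact: Ap.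
Qed.

Lemma psdmx_conj_diag n (V : 'M[C]_n) (h : 'rV[C]_n) : V \is unitarymx ->
  (forall j, 0 <= h 0 j) -> psdmx (adjmx V *m diag_mx h *m V).
Proof.
move=> Vu h0 u; rewrite -/(qform _ _) qform_spectral.
by apply: sumr_ge0 => j _; apply: mulr_ge0 => //; apply: exprn_ge0.
Qed.

Lemma mxtrace_conj_diag n (V : 'M[C]_n) d : V \is unitarymx ->
  \tr (adjmx V *m diag_mx d *m V) = \sum_j d 0 j.
Proof.
by move=> Vu; rewrite mxtrace_mulC mulmxA unitarymx_mul_adjmx // mul1mx mxtrace_diag.
Qed.

Lemma conj_diag_mul n (V : 'M[C]_n) d e : V \is unitarymx ->
  (adjmx V *m diag_mx d *m V) *m (adjmx V *m diag_mx e *m V) =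
  adjmx V *m diag_mx (\row_j (d 0 j * e 0 j)) *m V.
Proof.
move=> Vu; rewrite -mulmx_diag !mulmxA; congr (_ *m _).
by rewrite -[_ *m V *m adjmx V]mulmxA unitarymx_mul_adjmx // mulmx1.
Qed.

(* [sqrtmx] is defined through the diagonalization [spectralmx]; any other
   unitary diagonalization gives the same result, since the change of basis
   intertwines the two diagonals, hence also their square roots. *)
Lemma sqrtmx_conj_diag n (V : 'M[C]_n) (e : 'rV[C]_n) : V \is unitarymx ->
  sqrtmx (adjmx V *m diag_mx e *m V) = adjmx V *m diag_mx (map_mx sqrtC e) *m V.
Proof.
move=> Vu; set A := adjmx V *m _ *m V.
have An : A \is normalmx.
  by apply/orthomx_spectral_subproof; exists (V, e) => //=; rewrite invmx_unitaryE.
have Pu := spectral_unitarymx A.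
have /orthomx_spectralP := An; rewrite invmx_unitaryE // /sqrtmx invmx_unitaryE //.
set P := spectralmx A; set d := spectral_diag A => EA.
set W := P *m adjmx V.
have DW : diag_mx d *m W = W *m diag_mx e.
  have <- : P *m A *m adjmx V = diag_mx d *m W.
    by rewrite {1}EA /W !mulmxA unitarymx_mul_adjmx // mul1mx.
  by rewrite /A /W !mulmxA -[_ *m V *m adjmx V]mulmxA unitarymx_mul_adjmx // mulmx1.
have PWV : P = W *m V by rewrite /W -mulmxA unitarymx_adjmx_mul // mulmx1.
have PW : adjmx P *m W = adjmx V by rewrite /W mulmxA unitarymx_adjmx_mul // mul1mx.
clearbody W.
have DW' : diag_mx (map_mx sqrtC d) *m W = W *m diag_mx (map_mx sqrtC e).
  apply/matrixP=> i j; move/matrixP: DW => /(_ i j).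
  rewrite !mul_diag_mx !mul_mx_diag !mxE.
  have [->|Wn] := eqVneq (W i j) 0; first by move=> _; rewrite mulr0 mul0r.
  by rewrite mulrC => /(mulfI Wn) ->; rewrite mulrC.
rewrite {2}PWV !mulmxA -[adjmx P *m _ *m W]mulmxA DW'.
by rewrite !mulmxA PW.
Qed.

Lemma sqrtmx_sqr n (H : 'M[C]_n) : psdmx H -> sqrtmx (H *m H) = H.
Proof.
case/psdmx_spectral => Pu EH H0.
rewrite {1 2}EH conj_diag_mul // sqrtmx_conj_diag // [in RHS]EH.
by congr (_ *m diag_mx _ *m _); apply/rowP => j; rewrite !mxE -expr2 sqrCK.
Qed.

Lemma psdmx_sqrtmx n (A : 'M[C]_n) : psdmx A ->
  [/\ psdmx (sqrtmx A), adjmx (sqrtmx A) = sqrtmx A & sqrtmx A *m sqrtmx A = A].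
Proof.
case/psdmx_spectral; set P := spectralmx A; set d := spectral_diag A => Pu EA d0.
have -> : sqrtmx A = adjmx P *m diag_mx (map_mx sqrtC d) *m P.
  by rewrite {1}EA sqrtmx_conj_diag.
split.
- by apply: psdmx_conj_diag => // j; rewrite mxE sqrtC_ge0.
- rewrite !adjmxM adjmxK adjmx_diag mulmxA; congr (_ *m diag_mx _ *m _).
  by apply/rowP => j; rewrite !mxE geC0_conj // sqrtC_ge0.
- rewrite conj_diag_mul // [in RHS]EA; congr (_ *m diag_mx _ *m _).
  by apply/rowP => j; rewrite !mxE -expr2 sqrtCK.
Qed.

(* The eigenvalues of a state lie in [[0, 1]]. *)
Lemma state_qform_bounds n (A : 'M[C]_n) u : is_state A ->
  [/\ 0 <= qform u A, qform u A <= qform u 1%:M,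
      0 <= qform u (sqrtmx A) & qform u (sqrtmx A) <= qform u 1%:M].
Proof.
case=> /psdmx_spectral[Pu EA d0] trA.
move: Pu EA d0 trA; set P := spectralmx A; set d := spectral_diag A => Pu EA d0 trA.
have d1 j : d 0 j <= 1.
  move: trA; rewrite EA mxtrace_conj_diag // (bigD1 j) //= => <-.
  by rewrite lerDl; apply: sumr_ge0.
have bounds (h : 'rV[C]_n) : (forall j, 0 <= h 0 j) -> (forall j, h 0 j <= 1) ->
    0 <= qform u (adjmx P *m diag_mx h *m P) <= qform u 1%:M.
  have -> : 1%:M = adjmx P *m diag_mx (const_mx 1) *m P.
    by rewrite diag_const_mx mulmx1 unitarymx_adjmx_mul.
  move=> h0 h1; rewrite !qform_spectral; apply/andP; split.
    by apply: sumr_ge0 => j _; apply: mulr_ge0 => //; apply: exprn_ge0.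
  apply: ler_sum => j _; rewrite [const_mx _ _ _]mxE mul1r.
  by apply: ler_piMl => //; exact: exprn_ge0.
have /andP[-> ->] : 0 <= qform u A <= qform u 1%:M by rewrite EA; apply: bounds.
have /andP[-> ->] // : 0 <= qform u (sqrtmx A) <= qform u 1%:M.
rewrite EA sqrtmx_conj_diag //; apply: bounds => j; rewrite mxE ?sqrtC_ge0 //.
by rewrite -sqrtC1 ler_sqrtC // nnegrE.
Qed.

End Spectral.

Section Outer.
Variable C : numClosedFieldType.

Lemma adjmx_mul_self n (u : 'cV[C]_n) : adjmx u *m u = (qform u 1%:M)%:M.
Proof. by rewrite /qform mulmx1 {1}[adjmx u *m u]mx11_scalar. Qed.

Lemma outer_mul_outer n (w : 'cV[C]_n) :
  (w *m adjmx w) *m (w *m adjmx w) = qform w 1%:M *: (w *m adjmx w).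
Proof. by rewrite mulmxA -(mulmxA w) adjmx_mul_self mul_mx_scalar scalemxAl. Qed.

Lemma qform_outer n (u w : 'cV[C]_n) :
  qform u (w *m adjmx w) = qform (adjmx w *m u) 1%:M.
Proof. by rewrite /qform adjmxM adjmxK mulmx1 !mulmxA. Qed.

Lemma mxtrace_outer n (w : 'cV[C]_n) : \tr (w *m adjmx w) = qform w 1%:M.
Proof. by rewrite mxtrace_mulC trace_mx11 /qform mulmx1. Qed.

Lemma psdmx_outer n (w : 'cV[C]_n) : psdmx (w *m adjmx w).
Proof. by move=> u; rewrite -/(qform _ _) qform_outer qform1_ge0. Qed.

Lemma sqrtmx_outer n (w : 'cV[C]_n) :
  sqrtmx (w *m adjmx w) = (sqrtC (qform w 1%:M))^-1 *: (w *m adjmx w).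
Proof.
set c := qform w 1%:M; set H := _ *: _.
have Hpsd : psdmx H.
  move=> u; rewrite -/(qform u H) qformZ; apply: mulr_ge0.
    by rewrite invr_ge0 sqrtC_ge0 qform1_ge0.
  exact: psdmx_outer.
suff <- : H *m H = w *m adjmx w by rewrite sqrtmx_sqr.
rewrite /H -scalemxAl -scalemxAr outer_mul_outer -/c !scalerA.
have [/qform1_eq0 ->|cn] := eqVneq c 0; first by rewrite mul0mx !scaler0.
by rewrite -invfM -expr2 sqrtCK mulVf // scale1r.
Qed.

Lemma sqrtmx_unit_outer n (w : 'cV[C]_n) : qform w 1%:M = 1 ->
  sqrtmx (w *m adjmx w) = w *m adjmx w.
Proof. by move=> w1; rewrite sqrtmx_outer w1 sqrtC1 invr1 scale1r. Qed.

Lemma invsqrtC_mul_sqr (c : C) : 0 <= c -> ((sqrtC c)^-1 * c) ^+ 2 = c.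
Proof.
have [->|cn] := eqVneq c 0; first by rewrite mulr0 expr0n.
by move=> _; rewrite exprMn exprVn sqrtCK expr2 mulrA mulVf // mul1r.
Qed.

Lemma fidelity_outer_sqr n (v : 'cV[C]_n) s : psdmx s ->
  fidelity (v *m adjmx v) s ^+ 2 = qform v s.
Proof.
case/psdmx_sqrtmx => _ Sherm Ssqr; rewrite /fidelity.
have -> : sqrtmx s *m (v *m adjmx v) *m sqrtmx s =
          (sqrtmx s *m v) *m adjmx (sqrtmx s *m v) by rewrite adjmxM Sherm !mulmxA.
rewrite sqrtmx_outer linearZ /= mxtrace_outer invsqrtC_mul_sqr ?qform1_ge0 //.
by rewrite -qform_conj Sherm mulmx1 Ssqr.
Qed.

Lemma affinity_unit_outer n (v : 'cV[C]_n) s : qform v 1%:M = 1 ->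
  affinity (v *m adjmx v) s = qform v (sqrtmx s).
Proof.
move=> v1; rewrite /affinity sqrtmx_unit_outer //.
by rewrite -mulmxA mxtrace_mulC trace_mx11 /qform mulmxA.
Qed.

End Outer.

Section Bipartite.
Variable C : numClosedFieldType.

(* The partial bra [<al| (x) I_b], mapping H_a (x) H_b to H_b. *)
Definition pbra na nb (al : 'cV[C]_na) : 'M[C]_(nb, na * nb) :=
  \matrix_(k, l) ((al (bidx l).1 0)^* * ((bidx l).2 == k)%:R).

Lemma bidx_mxvec_index na nb (a : 'I_na) (b : 'I_nb) :
  bidx (mxvec_index a b) = (a, b).
Proof. by rewrite /bidx /mxvec_index cast_ordK enum_rankK. Qed.

Lemma pbraE na nb (al : 'cV[C]_na) k a b :
  pbra nb al k (mxvec_index a b) = (al a 0)^* * (b == k)%:R.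
Proof. by rewrite mxE bidx_mxvec_index. Qed.

Lemma big_mxvec_index na nb (F : 'I_(na * nb) -> C) :
  \sum_l F l = \sum_a \sum_b F (mxvec_index a b).
Proof.
rewrite pair_big /= (reindex (fun p : 'I_na * 'I_nb => mxvec_index p.1 p.2)) //=.
exists (@bidx na nb) => [[a b] _|l _] /=; first by rewrite bidx_mxvec_index.
by case/mxvec_indexP: l => a b; rewrite bidx_mxvec_index.
Qed.

Lemma sum_mul_delta n (F : 'I_n -> C) i : \sum_k F k * (k == i)%:R = F i.
Proof.
rewrite (bigD1 i) //= eqxx mulr1 big1 ?addr0 // => k /negbTE ->.
by rewrite mulr0.
Qed.

Lemma sum_mul_delta_sym n (F : 'I_n -> C) i : \sum_k F k * (i == k)%:R = F i.
Proof. by rewrite -(sum_mul_delta F i); apply: eq_bigr => k _; rewrite eq_sym. Qed.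

Lemma kron_outer_pbra na nb (al : 'cV[C]_na) (B : 'M[C]_nb) :
  kronmx (al *m adjmx al) B = adjmx (pbra nb al) *m B *m pbra nb al.
Proof.
apply/matrixP => l l'; case/mxvec_indexP: l => a b; case/mxvec_indexP: l' => a' b'.
rewrite !mxE !bidx_mxvec_index /= big_ord1 adjmxE.
under eq_bigr => j _ do rewrite mxE pbraE mulrA.
rewrite sum_mul_delta_sym.
under eq_bigr => k _ do rewrite adjmxE pbraE conjCM conjCK conjC_nat mulrAC.
by rewrite sum_mul_delta_sym; ring.
Qed.

Lemma pbra_mul_adjmx na nb (al be : 'cV[C]_na) :
  pbra nb al *m adjmx (pbra nb be) = ((adjmx al *m be) 0 0) *: 1%:M.
Proof.
apply/matrixP => k k'; rewrite !mxE big_mxvec_index.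
under eq_bigr => a _ do under eq_bigr => b _ do
  rewrite adjmxE !pbraE conjCM conjCK conjC_nat mulrACA.
under eq_bigr => a _ do rewrite -big_distrr /= (eq_bigr _ (fun b _ => mulrC _ _)).
under eq_bigr => a _ do rewrite sum_mul_delta.
by rewrite -big_distrl /=; congr (_ * _); apply: eq_bigr => j _; rewrite adjmxE.
Qed.

Lemma qform_ptrace_b na nb (al : 'cV[C]_na) (M : 'M[C]_(na * nb)) :
  qform al (ptrace_b M) = \tr (pbra nb al *m M *m adjmx (pbra nb al)).
Proof.
rewrite qformE /mxtrace.
have -> : \sum_k (pbra nb al *m M *m adjmx (pbra nb al)) k k =
    \sum_k \sum_j \sum_i (al i 0)^* * M (mxvec_index i k) (mxvec_index j k) * al j 0.
  apply: eq_bigr => k _; rewrite mxE big_mxvec_index; apply: eq_bigr => j _.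
  under eq_bigr => b _ do
    rewrite adjmxE pbraE conjCM conjCK conjC_nat mxE big_mxvec_index.
  under eq_bigr => b _ do under eq_bigr => a _ do
     (under eq_bigr => b0 _ do rewrite pbraE mulrAC; rewrite sum_mul_delta).
  under eq_bigr => b _ do rewrite mulrA.
  by rewrite sum_mul_delta big_distrl.
under eq_bigr => j _ do under eq_bigr => i _ do rewrite mxE big_distrr big_distrl.
rewrite exchange_big /=; under eq_bigr => i _ do rewrite exchange_big.
by rewrite exchange_big /=; apply: eq_bigr => k _; rewrite exchange_big.
Qed.

Lemma qform_ptrace_b_outer na nb (al : 'cV[C]_na) (v : 'cV[C]_(na * nb)) :
  qform al (ptrace_b (v *m adjmx v)) = qform (pbra nb al *m v) 1%:M.
Proof. by rewrite qform_ptrace_b -mxtrace_outer adjmxM !mulmxA. Qed.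

Lemma mxtrace_ptrace_b na nb (M : 'M[C]_(na * nb)) : \tr (ptrace_b M) = \tr M.
Proof. by rewrite /mxtrace big_mxvec_index; apply: eq_bigr => a _; rewrite mxE. Qed.

End Bipartite.

Section ClassicalQuantum.
Variable C : numClosedFieldType.
Variables (na nb : nat) (U : 'M[C]_na).
Hypothesis onbU : onbasis U.

Lemma pbra_col_mul_adjmx i j :
  pbra nb (col i U) *m adjmx (pbra nb (col j U)) = (i == j)%:R *: 1%:M.
Proof.
rewrite pbra_mul_adjmx; congr (_ *: _).
transitivity ((adjmx U *m U) i j); last by rewrite onbU mxE.
by rewrite !mxE; apply: eq_bigr => k _; rewrite !mxE.
Qed.

Lemma pbra_col_conj_mul i j (A B : 'M[C]_nb) :
  (adjmx (pbra nb (col i U)) *m A *m pbra nb (col i U)) *m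
  (adjmx (pbra nb (col j U)) *m B *m pbra nb (col j U)) =
  (i == j)%:R *: (adjmx (pbra nb (col i U)) *m (A *m B) *m pbra nb (col j U)).
Proof.
have -> : (adjmx (pbra nb (col i U)) *m A *m pbra nb (col i U)) *m
    (adjmx (pbra nb (col j U)) *m B *m pbra nb (col j U)) =
    adjmx (pbra nb (col i U)) *m A *m
    (pbra nb (col i U) *m adjmx (pbra nb (col j U))) *m B *m pbra nb (col j U).
  by rewrite !mulmxA.
by rewrite pbra_col_mul_adjmx -scalemxAr mulmx1 -!scalemxAl !mulmxA.
Qed.

Definition cqmx (p : 'I_na -> C) (S : 'I_na -> 'M[C]_nb) : 'M[C]_(na * nb) :=
  \sum_i p i *: kronmx (col i U *m adjmx (col i U)) (S i).

Lemma is_cq_inE s : is_cq_in U s <->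
  exists p S, [/\ forall i, 0 <= p i, \sum_i p i = 1, forall i, is_state (S i)
                & s = cqmx p S].
Proof.
split=> [[p [S [p0 [p1 [Ss ->]]]]]|[p [S [p0 p1 Ss ->]]]]; first by exists p, S.
by exists p, S.
Qed.

Lemma qform_cqmx p S v :
  qform v (cqmx p S) = \sum_i p i * qform (pbra nb (col i U) *m v) (S i).
Proof.
rewrite /cqmx; under eq_bigr do rewrite kron_outer_pbra.
by rewrite qform_sum; apply: eq_bigr => i _; rewrite qform_conj.
Qed.

Lemma psdmx_cqmx p S : (forall i, 0 <= p i) -> (forall i, is_state (S i)) ->
  psdmx (cqmx p S).
Proof.
move=> p0 Ss v; rewrite -/(qform _ _) qform_cqmx.
apply: sumr_ge0 => i _; apply: mulr_ge0 => //.
by case: (state_qform_bounds (pbra nb (col i U) *m v) (Ss i)).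
Qed.

Lemma is_cq_in_psdmx (s : 'M[C]_(na * nb)) : is_cq_in U s -> psdmx s.
Proof. by case/is_cq_inE => p [S [p0 _ Ss ->]]; exact: psdmx_cqmx. Qed.

(* The blocks of a cq state are mutually orthogonal, so its square root is
   taken block by block. *)
Lemma sqrtmx_cqmx p S : (forall i, 0 <= p i) -> (forall i, is_state (S i)) ->
  sqrtmx (cqmx p S) = \sum_i sqrtC (p i) *:
    (adjmx (pbra nb (col i U)) *m sqrtmx (S i) *m pbra nb (col i U)).
Proof.
move=> p0 Ss; set T := \sum_i _ *: _.
have Tpsd : psdmx T.
  move=> v; rewrite -/(qform v T) qform_sum; apply: sumr_ge0 => i _.
  rewrite qform_conj; apply: mulr_ge0; first by rewrite sqrtC_ge0.
  by case: (state_qform_bounds (pbra nb (col i U) *m v) (Ss i)).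
suff <- : T *m T = cqmx p S by rewrite sqrtmx_sqr.
rewrite mulmx_suml; apply: eq_bigr => i _; rewrite mulmx_sumr (bigD1 i) //=.
rewrite big1 => [|j /negbTE ji]; last first.
  by rewrite -scalemxAl -scalemxAr pbra_col_conj_mul eq_sym ji scale0r !scaler0.
rewrite addr0 -scalemxAl -scalemxAr scalerA -expr2 sqrtCK pbra_col_conj_mul eqxx.
have [_ _ ->] := psdmx_sqrtmx (proj1 (Ss i)).
by rewrite scale1r kron_outer_pbra.
Qed.

End ClassicalQuantum.

Lemma real_amgm (R : numFieldType) (a b c : R) :
  a \is Num.real -> b \is Num.real -> 0 < c ->
  2%:R * (a * b) <= a ^+ 2 * c + b ^+ 2 / c.
Proof.
move=> ar br c0; have cn : c != 0 by rewrite gt_eqF.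
have -> : a ^+ 2 * c + b ^+ 2 / c = 2%:R * (a * b) + c * (a - b / c) ^+ 2 by field.
rewrite lerDl; apply: mulr_ge0; first exact: ltW.
apply: real_exprn_even_ge0 => //; apply: realB => //; apply: realM => //.
by rewrite realV; apply: gtr0_real.
Qed.

Section ConvexCombinations.
Variables (R : numDomainType) (n : nat) (w : 'I_n -> R).
Hypotheses (w_ge0 : forall j, 0 <= w j) (w_sum1 : \sum_j w j = 1).

Lemma convex_comb_le (x : 'I_n -> R) m :
  (forall j, x j <= m) -> \sum_j w j * x j <= m.
Proof.
move=> xm; apply: le_trans (_ : \sum_j w j * m <= m).
  by apply: ler_sum => j _; apply: ler_wpM2l.
by rewrite -big_distrl /= w_sum1 mul1r.
Qed.

Lemma convex_comb_sqr_le (x : 'I_n -> R) : (forall j, x j \is Num.real) ->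
  (\sum_j w j * x j) ^+ 2 <= \sum_j w j * x j ^+ 2.
Proof.
move=> xr; set m := \sum_j w j * x j.
have mr : m \is Num.real.
  by apply: rpred_sum => j _; apply: realM => //; apply: ger0_real.
have : 0 <= \sum_j w j * (x j - m) ^+ 2.
  apply: sumr_ge0 => j _; apply: mulr_ge0 => //.
  by apply: real_exprn_even_ge0 => //; apply: realB.
have expand y : \sum_j w j * (x j - y) ^+ 2 =
    \sum_j w j * x j ^+ 2 - 2%:R * y * (\sum_j w j * x j) + y ^+ 2 * \sum_j w j.
  rewrite !big_distrr /= -sumrB -big_split /=.
  by apply: eq_bigr => j _; ring.
rewrite expand -/m.
by rewrite w_sum1 mulr1 -subr_ge0; congr (0 <= _); ring.
Qed.

End ConvexCombinations.

(* Jensen's inequality row by row, then the column sums. *)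
Lemma doubly_stochastic_sqr_le (R : numDomainType) n (w : 'I_n -> 'I_n -> R)
    (x : 'I_n -> R) :
  (forall j i, 0 <= w j i) -> (forall i, \sum_j w j i = 1) ->
  (forall j, \sum_i w j i = 1) -> (forall j, x j \is Num.real) ->
  \sum_i (\sum_j w j i * x j) ^+ 2 <= \sum_j x j ^+ 2.
Proof.
move=> w0 wcol wrow xr.
apply: le_trans (_ : \sum_i \sum_j w j i * x j ^+ 2 <= _).
  by apply: ler_sum => i _; apply: convex_comb_sqr_le.
by rewrite exchange_big /=; apply: ler_sum => j _; rewrite -big_distrl /= wrow mul1r.
Qed.

Lemma real_argmax (R : numDomainType) n (f : 'I_n -> R) :
  (0 < n)%N -> (forall j, f j \is Num.real) -> exists k, forall j, f j <= f k.
Proof.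
case: n f => [|n] f //= _; elim: n f => [|n IH] f fr.
  by exists ord0 => j; rewrite ord1.
have [k' hk] := IH (fun j => f (lift ord0 j)) (fun j => fr _).
have [le0k|] := boolP (f ord0 <= f (lift ord0 k')).
  by exists (lift ord0 k') => j; case: (unliftP ord0 j) => [j'|] ->.
move/negbTE=> lt; have lek0 : f (lift ord0 k') <= f ord0.
  by move: (real_leVge (fr ord0) (fr (lift ord0 k'))); rewrite lt.
exists ord0 => j; case: (unliftP ord0 j) => [j'|] ->; last exact: lexx.
exact: le_trans (hk j') lek0.
Qed.

Section UnitaryWeights.
Variable C : numClosedFieldType.

Lemma unitarymx_sqr_norm_sum n (W : 'M[C]_n) : W \is unitarymx ->
  (forall j, \sum_i `|W j i| ^+ 2 = 1) /\ (forall i, \sum_j `|W j i| ^+ 2 = 1).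
Proof.
move=> Wu; split => [j|i].
  have /matrixP /(_ j j) := unitarymx_mul_adjmx Wu; rewrite !mxE eqxx mulr1n => <-.
  by apply: eq_bigr => i _; rewrite !mxE normCK.
have /matrixP /(_ i i) := unitarymx_adjmx_mul Wu; rewrite !mxE eqxx mulr1n => <-.
by apply: eq_bigr => j _; rewrite !mxE normCK mulrC.
Qed.

End UnitaryWeights.

Section NormalizedState.
Variable C : numClosedFieldType.

Lemma is_state_unit_outer n (u : 'cV[C]_n) :
  qform u 1%:M = 1 -> is_state (u *m adjmx u).
Proof. by move=> u1; split; [exact: psdmx_outer | rewrite mxtrace_outer]. Qed.

(* For [psi = 0] any state would do; the maximally mixed one is chosen. *)
Definition normalized_state nb (psi : 'cV[C]_nb) : 'M[C]_nb :=
  if qform psi 1%:M == 0 then nb%:R^-1 *: 1%:M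
  else let u := (sqrtC (qform psi 1%:M))^-1 *: psi in u *m adjmx u.

Lemma normalized_stateP nb (psi : 'cV[C]_nb) : (0 < nb)%N ->
  [/\ is_state (normalized_state psi),
      qform psi (normalized_state psi) = qform psi 1%:M &
      qform psi (sqrtmx (normalized_state psi)) = qform psi 1%:M].
Proof.
move=> nb0; rewrite /normalized_state; set c := qform psi 1%:M.
have c0 : 0 <= c by apply: qform1_ge0.
case: eqP => [c_eq0|/eqP c_neq0].
  have -> : psi = 0 by apply: qform1_eq0.
  rewrite !qform0; split => //; split.
    move=> x; rewrite -/(qform x _) qformZ; apply: mulr_ge0; last exact: qform1_ge0.
    by rewrite invr_ge0 ler0n.
  by rewrite linearZ /= mxtrace1 mulVf // pnatr_eq0 -lt0n.
set a := (sqrtC c)^-1; set u := a *: psi.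
have a0 : 0 <= a by rewrite invr_ge0 sqrtC_ge0.
have u1 : qform u 1%:M = 1.
  by rewrite /u qformZv geC0_conj // /a -invfM -expr2 sqrtCK mulVf.
suff psiu : qform psi (u *m adjmx u) = c.
  by split; rewrite ?sqrtmx_unit_outer //; exact: is_state_unit_outer.
rewrite qform_outer /u adjmxZ -scalemxAl adjmx_mul_self -/c geC0_conj //.
rewrite qform1 big_ord1 !mxE mulr1n ger0_norm ?mulr_ge0 //.
by rewrite /a invsqrtC_mul_sqr.
Qed.

End NormalizedState.

Section CqBounds.
Variable C : numClosedFieldType.
Variables (na nb : nat) (U : 'M[C]_na) (p : 'I_na -> C) (S : 'I_na -> 'M[C]_nb).
Hypotheses (p_ge0 : forall i, 0 <= p i) (p_sum1 : \sum_i p i = 1).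
Hypothesis S_state : forall i, is_state (S i).
Variable v : 'cV[C]_(na * nb).
Let q i := qform (pbra nb (col i U) *m v) 1%:M.

Lemma qform_cqmx_le m : (forall i, q i <= m) -> qform v (cqmx U p S) <= m.
Proof.
move=> qm; rewrite qform_cqmx; apply: convex_comb_le => // i.
apply: le_trans (qm i).
by case: (state_qform_bounds (pbra nb (col i U) *m v) (S_state i)).
Qed.

(* Cauchy-Schwarz for [\sum_i sqrt(p_i) q_i], via [2 x y <= x^2 t + y^2 / t]. *)
Lemma qform_sqrtmx_cqmx_le t : onbasis U -> 0 < t -> \sum_i q i ^+ 2 <= t ^+ 2 ->
  qform v (sqrtmx (cqmx U p S)) <= t.
Proof.
move=> onbU t0 qt; rewrite sqrtmx_cqmx // qform_sum.
under eq_bigr do rewrite qform_conj.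
have q0 i : 0 <= q i by apply: qform1_ge0.
apply: le_trans (_ : \sum_i sqrtC (p i) * q i <= _).
  apply: ler_sum => i _; apply: ler_wpM2l; first by rewrite sqrtC_ge0.
  by case: (state_qform_bounds (pbra nb (col i U) *m v) (S_state i)).
rewrite -(@ler_pM2l _ 2%:R) ?ltr0n // big_distrr /=.
apply: le_trans (_ : \sum_i (p i * t + q i ^+ 2 / t) <= _).
  apply: ler_sum => i _; rewrite -{2}(sqrtCK (p i)).
  by apply: real_amgm => //; apply: ger0_real; rewrite ?sqrtC_ge0.
rewrite big_split /= -!big_distrl /= p_sum1 mul1r mulr_natl mulr2n lerD2l.
apply: le_trans (_ : t ^+ 2 / t <= t); last by rewrite expr2 mulfK ?gt_eqF.
by apply: ler_wpM2r => //; rewrite invr_ge0 ltW.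
Qed.

End CqBounds.

Section PureState.
Variable C : numClosedFieldType.
Variables (na nb : nat) (v : 'cV[C]_(na * nb)).
Hypothesis v_state : is_state (v *m adjmx v).

Let rho_a := ptrace_b (v *m adjmx v).
Let P := spectralmx rho_a.
Let lam := spectral_diag rho_a.
Let q (U : 'M[C]_na) i := qform (pbra nb (col i U) *m v) 1%:M.

Lemma pure_state_dims : (0 < na)%N /\ (0 < nb)%N.
Proof.
suff : (0 < na * nb)%N by rewrite muln_gt0 => /andP.
case: v_state => _; rewrite /mxtrace.
case: (pickP (fun _ : 'I_(na * nb) => true)) => [k _ _|no_idx].
  by apply: leq_ltn_trans (ltn_ord k).
rewrite big1 => [/eqP|k]; first by rewrite eq_sym oner_eq0.
by have := no_idx k.
Qed.

Lemma reduced_state_spectral :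
  [/\ P \is unitarymx, rho_a = adjmx P *m diag_mx lam *m P,
      forall j, 0 <= lam 0 j & \sum_j lam 0 j = 1].
Proof.
have rho_psd : psdmx rho_a.
  by move=> al; rewrite -/(qform al _) qform_ptrace_b_outer qform1_ge0.
have [Pu Erho lam0] := psdmx_spectral rho_psd.
split => //; rewrite -(mxtrace_conj_diag _ Pu) -Erho mxtrace_ptrace_b.
by case: v_state.
Qed.

(* The weights [q_i = <alpha_i| rho_a |alpha_i>] are a doubly stochastic
   mixture of the eigenvalues of [rho_a]. *)
Lemma reduced_weight_spectral U i :
  q U i = \sum_j `|(P *m U) j i| ^+ 2 * lam 0 j.
Proof.
have [_ Erho _ _] := reduced_state_spectral.
rewrite /q -qform_ptrace_b_outer -/rho_a Erho qform_spectral.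
apply: eq_bigr => j _; rewrite mulrC; congr (`|_| ^+ 2 * _).
by rewrite !mxE; apply: eq_bigr => k _; rewrite mxE.
Qed.

Lemma reduced_weight_le U k i : onbasis U -> (forall j, lam 0 j <= lam 0 k) ->
  q U i <= lam 0 k.
Proof.
have [Pu _ lam0 _] := reduced_state_spectral.
move=> onbU lamk; have Uu : U \is unitarymx by apply/unitarymxP/mulmx1C.
have [_ col1] := unitarymx_sqr_norm_sum (mul_unitarymx Pu Uu).
rewrite reduced_weight_spectral.
apply: convex_comb_le => // j; exact: exprn_ge0.
Qed.

Lemma reduced_weights_sqr_le U : onbasis U ->
  \sum_i q U i ^+ 2 <= \sum_j lam 0 j ^+ 2.
Proof.
have [Pu _ lam0 _] := reduced_state_spectral.
move=> onbU; have Uu : U \is unitarymx by apply/unitarymxP/mulmx1C.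
have [row1 col1] := unitarymx_sqr_norm_sum (mul_unitarymx Pu Uu).
under eq_bigr do rewrite reduced_weight_spectral.
apply: doubly_stochastic_sqr_le => // [j i|j]; first exact: exprn_ge0.
exact: ger0_real.
Qed.

(* In the eigenbasis of [rho_a], the conditional states of [v] saturate
   [state_qform_bounds] for any choice of weights [p]. *)
Lemma eigenbasis_cq_witness (p : 'I_na -> C) :
  (forall i, 0 <= p i) -> \sum_i p i = 1 ->
  exists U s, [/\ onbasis U, eigenbasis U rho_a, is_cq_in U s,
    qform v s = \sum_i p i * lam 0 i &
    qform v (sqrtmx s) = \sum_i sqrtC (p i) * lam 0 i].
Proof.
have [Pu Erho _ _] := reduced_state_spectral; have [_ nb0] := pure_state_dims.
move=> p0 p1; set U := adjmx P.
exists U; pose s := cqmx U p (fun i => normalized_state (pbra nb (col i U) *m v)).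
exists s.
have qU i : q U i = lam 0 i.
  by rewrite /q -qform_ptrace_b_outer -/rho_a Erho qform_spectral_col.
have Sst i := normalized_stateP (pbra nb (col i U) *m v) nb0.
have onbU : onbasis U by rewrite /onbasis /U adjmxK unitarymx_mul_adjmx.
split => //.
- move=> i; exists (lam 0 i); rewrite Erho /U colE !mulmxA -(mulmxA _ P).
  rewrite unitarymx_mul_adjmx // mulmx1 -mulmxA scalemxAr; congr (_ *m _).
  rewrite mul_diag_mx; apply/matrixP => a b; rewrite !mxE.
  by case: eqP => [->|] //=; rewrite !mulr0.
- by apply/is_cq_inE; exists p, (fun i => normalized_state (pbra nb (col i U) *m v));
    split => // i; case: (Sst i).
- rewrite /s qform_cqmx; apply: eq_bigr => i _.
  by case: (Sst i) => _ -> _; rewrite -/(q U i) qU.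
- rewrite /s sqrtmx_cqmx //; last by move=> i; case: (Sst i).
  rewrite qform_sum; apply: eq_bigr => i _; rewrite qform_conj.
  by case: (Sst i) => _ _ ->; rewrite -/(q U i) qU.
Qed.

Lemma pure_fidelity_optimal : exists U' s',
  [/\ onbasis U', eigenbasis U' rho_a, is_cq_in U' s' &
      forall U s, onbasis U -> is_cq_in U s ->
        fidelity (v *m adjmx v) s ^+ 2 <= fidelity (v *m adjmx v) s' ^+ 2].
Proof.
have [_ _ lam0 _] := reduced_state_spectral; have [na0 _] := pure_state_dims.
have [k lamk] := real_argmax na0 (fun j => ger0_real (lam0 j)).
have dk0 (i : 'I_na) : 0 <= ((i == k)%:R : C) by apply: ler0n.
have dk1 : \sum_(i < na) ((i == k)%:R : C) = 1.
  by rewrite (bigD1 k) //= eqxx big1 ?addr0 // => i /negbTE ->.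
have [U' [s' [onbU' eigU' cqs' qs' _]]] := eigenbasis_cq_witness dk0 dk1.
exists U', s'; split => //.
move=> U s onbU /is_cq_inE[p [S [p0 p1 Sst ->]]].
have s_psd := psdmx_cqmx U p0 Sst; have s'_psd := is_cq_in_psdmx cqs'.
rewrite !fidelity_outer_sqr // qs'.
under [X in _ <= X]eq_bigr do rewrite mulrC; rewrite sum_mul_delta.
by apply: qform_cqmx_le => // i; apply: reduced_weight_le.
Qed.

Lemma pure_affinity_optimal : exists U' s',
  [/\ onbasis U', eigenbasis U' rho_a, is_cq_in U' s' &
      forall U s, onbasis U -> is_cq_in U s ->
        affinity (v *m adjmx v) s ^+ 2 <= affinity (v *m adjmx v) s' ^+ 2].
Proof.
have [_ _ lam0 lam1] := reduced_state_spectral.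
have v1 : qform v 1%:M = 1 by case: v_state => _; rewrite mxtrace_outer.
set s2 := \sum_j lam 0 j ^+ 2; set t := sqrtC s2.
have s2_gt0 : 0 < s2.
  rewrite lt_def sumr_ge0 ?andbT => [|j _]; last exact: exprn_ge0.
  apply/eqP => /(psumr_eq0P (fun j _ => exprn_ge0 2 (lam0 j))) lam_eq0.
  move: lam1; rewrite big1 => [/eqP|j _]; first by rewrite eq_sym oner_eq0.
  by move/eqP: (lam_eq0 j isT); rewrite expf_eq0 /= => /eqP.
have t_gt0 : 0 < t by rewrite sqrtC_gt0.
have tt : t ^+ 2 = s2 by apply: sqrtCK.
pose p i := lam 0 i ^+ 2 / s2.
have p0 i : 0 <= p i by apply: divr_ge0; [apply: exprn_ge0 | apply: ltW].
have p1 : \sum_i p i = 1 by rewrite -big_distrl /= mulfV // gt_eqF.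
have [U' [s' [onbU' eigU' cqs' _ qs']]] := eigenbasis_cq_witness p0 p1.
exists U', s'; split => //.
move=> U s onbU cqs; rewrite !affinity_unit_outer // qs'.
have -> : \sum_i sqrtC (p i) * lam 0 i = t.
  have sqrt_p i : sqrtC (p i) = lam 0 i / t.
    by rewrite /p -tt -expr_div_n sqrCK // divr_ge0 // ltW.
  under eq_bigr do rewrite sqrt_p mulrAC -expr2.
  by rewrite -big_distrl /= -/s2 -tt expr2 mulfK ?gt_eqF.
have [A0 _ _] := psdmx_sqrtmx (is_cq_in_psdmx cqs).
case/is_cq_inE: cqs => p' [S [p'0 p'1 Sst Es]].
have At : qform v (sqrtmx s) <= t.
  rewrite Es (qform_sqrtmx_cqmx_le p'0 p'1 Sst onbU t_gt0) //.
  by rewrite tt reduced_weights_sqr_le.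
by rewrite !expr2 ler_pM ?A0.
Qed.

Lemma pure_cc_optimal X : exists U' s',
  [/\ onbasis U', eigenbasis U' rho_a, is_cq_in U' s' &
      forall U s, onbasis U -> is_cq_in U s ->
        dX X (v *m adjmx v) s' <= dX X (v *m adjmx v) s].
Proof.
have [U' [s' [onbU' eigU' cqs' opt]]] : exists U' s',
    [/\ onbasis U', eigenbasis U' rho_a, is_cq_in U' s' &
        forall U s, onbasis U -> is_cq_in U s ->
          Xfun X (v *m adjmx v) s ^+ 2 <= Xfun X (v *m adjmx v) s' ^+ 2].
  by case: X; [exact: pure_fidelity_optimal | exact: pure_affinity_optimal].
exists U', s'; split => // U s onbU cqs.
exact: lerB (lexx 1) (opt U s onbU cqs).
Qed.

End PureState.

Lemma eigenbasis_scalar (C : numClosedFieldType) n (U : 'M[C]_n) a :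
  eigenbasis U (a *: 1%:M).
Proof. by move=> i; exists a; rewrite -scalemxAl mul1mx. Qed.

Theorem theorem9 (C : numClosedFieldType) (na nb : nat) (X : fid_kind)
    (rho : 'M[C]_(na * nb)) :
  is_state rho ->
  forall cc d : C,
    is_min (cc_values X rho) cc ->
    is_min (disc_values X rho) d ->
    d <= cc /\
    ((ptrace_b rho = na%:R^-1 *: 1%:M \/ is_pure rho) -> cc = d).
Proof.
move=> rho_state cc d [cc_val cc_min] [d_val d_min].
have d_le_cc : d <= cc.
  by apply: d_min; case: cc_val => U [s [onbU [_ [cqs ->]]]]; exists U, s.
split => // equality_case; apply/eqP; rewrite eq_le d_le_cc andbT.
case: d_val => U [s [onbU [cqs ->]]].
case: equality_case => [rho_a_mixed | [_ [v Erho]]].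
  apply: cc_min; exists U, s; rewrite rho_a_mixed.
  by split; [|split; [exact: eigenbasis_scalar|]].
subst rho; have [U' [s' [onbU' eigU' cqs' opt]]] := pure_cc_optimal rho_state X.
by apply: le_trans (opt U s onbU cqs); apply: cc_min; exists U', s'.
Qed.
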